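(* Let $L\geq 1$ be an integer and define, for $\beta\in(0,1)$, $$f(\beta)=\frac{(1-\beta^{2L})^2}{L^2\beta^{2L}(1-\beta^2)}.$$ Then $f$ is strictly decreasing on $(0,1)$.
   Context: $L$ is the number of users of a broadcast channel; $f(\beta)$ is the limit $\lim_{N\to\infty}\|\mathbf{F}\|_F^2/N$ of the normalized squared Frobenius norm of the base encoding matrix of the scheme, but the claim is purely about the displayed real function. *)

From Stdlib Require Import Reals.
Open Scope R_scope.

Definition fL (L : nat) (beta : R) : R :=
  (1 - beta ^ (2 * L)) ^ 2 / ((INR L) ^ 2 * beta ^ (2 * L) * (1 - beta ^ 2)).

(* With x = beta^2, summing the geometric series splits f into two factors,
   f = (1 - x^L) * (x^-1 + ... + x^-L) / L^2.
   On (0,1) both factors are positive and decrease in x, the second strictly,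
   so their product is strictly decreasing. *)
From Stdlib Require Import Reals Lra Lia.
Open Scope R_scope.

Definition inv_geom_sum (n : nat) (x : R) : R :=
  / x * sum_f_R0 (fun i => (/ x) ^ i) n.

Lemma inv_geom_sum_closed (n : nat) (x : R) : x <> 0 -> x <> 1 ->
  inv_geom_sum n x = (1 - x ^ S n) / (x ^ S n * (1 - x)).
Proof.
  intros Hx Hx1.
  assert (Hy : / x <> 1).
  { intro E; apply Hx1; rewrite <- (Rinv_inv x), E; apply Rinv_1. }
  assert (HX : x ^ S n <> 0) by (apply pow_nonzero; exact Hx).
  unfold inv_geom_sum; rewrite tech3, pow_inv by exact Hy.
  field; repeat split; try assumption; intro E; apply Hx1; lra.
Qed.

Lemma fL_succ_factor (n : nat) (b : R) : b <> 0 -> b ^ 2 <> 1 ->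
  fL (S n) b = (1 - (b ^ 2) ^ S n) * inv_geom_sum n (b ^ 2) / INR (S n) ^ 2.
Proof.
  intros Hb Hb2.
  assert (Hx : b ^ 2 <> 0) by (apply pow_nonzero; exact Hb).
  assert (HX : (b ^ 2) ^ S n <> 0) by (apply pow_nonzero; exact Hx).
  assert (HL : INR (S n) <> 0) by (apply not_0_INR; lia).
  unfold fL; rewrite inv_geom_sum_closed, pow_mult by assumption.
  field; repeat split; try assumption; intro E; apply Hb2; lra.
Qed.

Lemma sum_pow_ge_1 (y : R) (n : nat) : 0 <= y -> 1 <= sum_f_R0 (fun i => y ^ i) n.
Proof.
  intros Hy; induction n as [|n IH]; simpl.
  - lra.
  - assert (0 <= y ^ S n) by (apply pow_le; exact Hy). simpl in *; lra.
Qed.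

Lemma sum_pow_le_compat (y z : R) (n : nat) : 0 <= y <= z ->
  sum_f_R0 (fun i => y ^ i) n <= sum_f_R0 (fun i => z ^ i) n.
Proof.
  intros Hyz; apply sum_Rle; intros i _; apply pow_incr; exact Hyz.
Qed.

Lemma inv_geom_sum_pos (n : nat) (x : R) : 0 < x -> 0 < inv_geom_sum n x.
Proof.
  intros Hx; unfold inv_geom_sum.
  assert (Hy : 0 < / x) by (apply Rinv_0_lt_compat; exact Hx).
  assert (HS := sum_pow_ge_1 (/ x) n (Rlt_le _ _ Hy)).
  nra.
Qed.

Lemma inv_geom_sum_decreasing (n : nat) (x1 x2 : R) : 0 < x1 < x2 ->
  inv_geom_sum n x2 < inv_geom_sum n x1.
Proof.
  intros Hx; unfold inv_geom_sum.
  assert (Hy2 : 0 < / x2) by (apply Rinv_0_lt_compat; lra).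
  assert (Hy : / x2 < / x1) by (apply Rinv_lt_contravar; nra).
  assert (HS2 := sum_pow_ge_1 (/ x2) n (Rlt_le _ _ Hy2)).
  assert (HS := sum_pow_le_compat (/ x2) (/ x1) n (conj (Rlt_le _ _ Hy2) (Rlt_le _ _ Hy))).
  nra.
Qed.

Theorem lemma1 (L : nat) (HL : (1 <= L)%nat) :
  forall b1 b2 : R, 0 < b1 -> b1 < b2 -> b2 < 1 -> fL L b2 < fL L b1.
Proof.
  intros b1 b2 H1 H12 H2.
  destruct L as [|n]; [lia|].
  rewrite !fL_succ_factor by nra.
  assert (Hx : 0 < b1 ^ 2 < b2 ^ 2) by (split; nra).
  assert (Hx2 : b2 ^ 2 < 1) by nra.
  assert (HA1 : (b1 ^ 2) ^ S n < 1) by (apply pow_lt_1_compat; [lra | lia]).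
  assert (HA : (b1 ^ 2) ^ S n <= (b2 ^ 2) ^ S n) by (apply pow_incr; lra).
  assert (HB2 := inv_geom_sum_pos n (b2 ^ 2) ltac:(lra)).
  assert (HB := inv_geom_sum_decreasing n (b1 ^ 2) (b2 ^ 2) Hx).
  assert (HL2 : 0 < INR (S n) ^ 2) by (apply pow_lt, lt_0_INR; lia).
  apply Rmult_lt_compat_r; [apply Rinv_0_lt_compat; exact HL2|].
  nra.
Qed.
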